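(* Let $\phi\in(0,1)$ and $h_G>1$. For $b\in(0,1)$ define $g(x,b)=\frac{x^{1-b}-(1-x)^{1-b}}{x(1-x)^{1-b}-(1-x)x^{1-b}}$ for $x\in(\tfrac12,1)$, $g(\tfrac12,b)=\frac2b-2$, and $g(1,b)=+\infty$. Then: (i) $g(x,b)$ is continuous on $x\in[\tfrac12,1]$ (as an extended-real-valued function); (ii) $g(x,b)$ is increasing in $x$ and decreasing in $b$; (iii) if $\frac{2}{\phi(h_G-1)+2}<b<1$, then the equation $g(x,b)=\phi(h_G-1)$ has a unique solution $\hat x(\phi,h_G,b)\in(\tfrac12,1)$, and $\hat x(\phi,h_G,b)$ is increasing with respect to each of $b$, $h_G$, and $\phi$. *)

From HB Require Import structures.
From mathcomp Require Import all_boot all_order all_algebra.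
From mathcomp Require Import all_classical all_reals all_analysis.
Set Implicit Arguments. Unset Strict Implicit. Unset Printing Implicit Defensive.
Import Order.TTheory GRing.Theory Num.Theory.
Import numFieldNormedType.Exports.
Local Open Scope classical_set_scope.
Local Open Scope ring_scope.

Definition gfun {R : realType} (x b : R) : \bar R :=
  if x == 1 then +oo%E
  else if x == 2^-1 then (2 / b - 2)%:E
  else ((x `^ (1 - b) - (1 - x) `^ (1 - b)) /
        (x * (1 - x) `^ (1 - b) - (1 - x) * x `^ (1 - b)))%:E.

From HB Require Import structures.
From mathcomp Require Import all_boot all_order all_algebra.
From mathcomp Require Import all_classical all_reals all_analysis.
From mathcomp Require Import ring lra.
Import Order.TTheory GRing.Theory Num.Theory.
Import numFieldNormedType.Exports.
Set Implicit Arguments. Unset Strict Implicit. Unset Printing Implicit Defensive.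
Local Open Scope classical_set_scope.
Local Open Scope ring_scope.

(* Put t = 1 - b and r = x / (1 - x), which maps (1/2, 1) onto (1, +oo).  Then
   g = G(t, r) = (1 + r) (r^t - 1) / (r - r^t) = 2 Q / (1 - Q), where
   Q(t, r) = (r^t - 1)(r + 1) / ((r^t + 1)(r - 1)) is tanh(ts/2) / tanh(s/2)
   for r = e^s.  The derivative of Q in r has the sign of
   k(r) = t (r - 1/r) - r^t + r^-t, which vanishes at r = 1 and increases
   afterwards, so Q and G increase in r.  The mean value theorem squeezes Q
   between t/r and t(r + 1)/2, so Q -> t and g -> 2t/(1 - t) = 2/b - 2 as
   x -> 1/2; and G >= r^t - 1, so g -> +oo as x -> 1.  Monotonicity in t is a
   direct comparison.  Part (iii) then follows from the intermediate value
   theorem: the solution of g(x, b) = phi (h_G - 1) moves right when g(., b)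
   decreases (b grows) or when the right-hand side grows. *)

Section RealFacts.
Context {R : realType}.

Lemma is_derive1_continuous (f : R -> R) (x df : R) :
  is_derive x 1 f df -> {for x, continuous f}.
Proof. by case=> d _; apply: differentiable_continuous; apply/derivable1_diffP. Qed.

Lemma gtr0_is_derive_lt (f df : R -> R) (a c : R) : a < c ->
  (forall x, a <= x <= c -> is_derive x 1 f (df x)) ->
  (forall x, a < x < c -> 0 < df x) -> f a < f c.
Proof.
move=> ac fdf df_gt0.
have fdf_in x : x \in `]a, c[ -> is_derive x 1 f (df x).
  by rewrite in_itv /= => /andP[ax xc]; apply: fdf; rewrite !ltW.
have f_cont : {within `[a, c], continuous f}.
  apply: continuous_in_subspaceT => x; rewrite inE /= in_itv /= => xac.
  exact: is_derive1_continuous (fdf x xac).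
have [y + E] := MVT ac fdf_in f_cont.
rewrite in_itv /= => yac; rewrite -subr_gt0 E.
by rewrite mulr_gt0 ?subr_gt0 ?df_gt0.
Qed.

Lemma powRE (x t : R) : 0 < x -> x `^ t = expR (t * ln x).
Proof. by move=> x0; rewrite /powR gt_eqF. Qed.

Lemma ltr_powR (x : R) : 1 < x -> {homo powR x : s t / s < t}.
Proof.
move=> x1 s t st; have x0 : 0 < x by apply: lt_trans x1.
by rewrite !powRE // ltr_expR ltr_pM2r // ln_gt0.
Qed.

Lemma powR_gt1 (x t : R) : 1 < x -> 0 < t -> 1 < x `^ t.
Proof. by move=> x1 t0; rewrite -{1}(powRr0 x) ltr_powR. Qed.

Lemma ltr1_powR (x t : R) : 1 < x -> t < 1 -> x `^ t < x.
Proof.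
move=> x1 t1; have x0 : 0 < x by apply: lt_trans x1.
by rewrite -{2}(powRr1 (ltW x0)) ltr_powR.
Qed.

Lemma powRB1 (x t : R) : 0 < x -> x `^ (t - 1) = x `^ t / x.
Proof. by move=> x0; rewrite powRB ?powRr1 ?ltW // (gt_eqF x0) implybT. Qed.

Lemma powR_MVT (t r : R) : 1 < r ->
  exists2 c, 1 < c < r & r `^ t - 1 = t * c `^ (t - 1) * (r - 1).
Proof.
move=> r1.
have dpow (x : R) : 1 <= x -> is_derive x 1 (@powR R ^~ t) (t * x `^ (t - 1)).
  by move=> x1; apply: is_derive1_powR; apply: lt_le_trans x1.
have dpow_in (x : R) : x \in `]1, r[ -> is_derive x 1 (@powR R ^~ t) (t * x `^ (t - 1)).
  by rewrite in_itv /= => /andP[x1 _]; apply/dpow/ltW.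
have pow_cont : {within `[1, r], continuous (@powR R ^~ t)}.
  apply: continuous_in_subspaceT => x; rewrite inE /= in_itv /= => /andP[x1 _].
  exact: is_derive1_continuous (dpow x x1).
have [c + E] := MVT r1 dpow_in pow_cont.
by rewrite in_itv /= => cr; exists c; rewrite // -E /= powR1.
Qed.

End RealFacts.

Section OddsForm.
Context {R : realType}.

Definition godds (t r : R) := (1 + r) * (r `^ t - 1) / (r - r `^ t).

Definition tanh_ratio (t r : R) :=
  (r `^ t - 1) * (r + 1) / ((r `^ t + 1) * (r - 1)).

Definition tanh_ratio_dnum (t r : R) := t * (r - r^-1) - r `^ t + r `^ (- t).

Lemma godds_lt_exponent (t1 t2 r : R) : 0 < t1 -> t1 < t2 -> t2 < 1 -> 1 < r ->
  godds t1 r < godds t2 r.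
Proof.
move=> t10 t12 t21 r1.
have u1 : 1 < r `^ t1 by apply: powR_gt1.
have u12 : r `^ t1 < r `^ t2 by apply: ltr_powR.
have u2 : r `^ t2 < r by apply: ltr1_powR.
rewrite /godds; set a := r `^ t1 in u1 u12 *; set c := r `^ t2 in u12 u2 *.
rewrite ltr_pdivrMr ?subr_gt0 ?(lt_trans u12) // mulrAC ltr_pdivlMr ?subr_gt0 //.
rewrite -subr_gt0.
have -> : (1 + r) * (c - 1) * (r - a) - (1 + r) * (a - 1) * (r - c)
  = (1 + r) * ((c - a) * (r - 1)) by ring.
by rewrite !mulr_gt0 ?subr_gt0 // addr_gt0 // (lt_trans ltr01).
Qed.

Variable t : R.
Hypothesis t01 : 0 < t < 1.

Let t_gt0 : 0 < t. Proof. by case/andP: t01. Qed.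
Let t_lt1 : t < 1. Proof. by case/andP: t01. Qed.

Lemma is_derive_tanh_ratio_dnum (x : R) : 0 < x ->
  is_derive x 1 (tanh_ratio_dnum t)
    (t * (1 + x ^- 2) - t * (x `^ t / x) - t * ((x `^ t)^-1 / x)).
Proof.
move=> x0.
have P1 := is_derive1_powR t x0.
have P2 := is_derive1_powR (- t) x0.
rewrite /tanh_ratio_dnum; apply: is_derive_eq.
  apply: is_deriveD; apply: is_deriveB; apply: is_deriveZ; apply: is_deriveB.
  by apply: is_deriveV; rewrite gt_eqF.
rewrite /= !powRB1 // powRN /GRing.scale /=; ring.
Qed.

Lemma tanh_ratio_dnum_gt0 (r : R) : 1 < r -> 0 < tanh_ratio_dnum t r.
Proof.
move=> r1; have <- : tanh_ratio_dnum t 1 = 0.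
  by rewrite /tanh_ratio_dnum !powR1 invr1 subrr mulr0 sub0r addNr.
apply: (gtr0_is_derive_lt (f := tanh_ratio_dnum t) r1) => x /andP[x1 _].
  exact/is_derive_tanh_ratio_dnum/(lt_le_trans ltr01 x1).
have x0 : 0 < x by apply: lt_trans x1.
have u1 : 1 < x `^ t by apply: powR_gt1.
have ux : x `^ t < x by apply: ltr1_powR.
set u := x `^ t in u1 ux *; have u0 : 0 < u by apply: lt_trans u1.
have -> : t * (1 + x ^- 2) - t * (u / x) - t * (u^-1 / x)
   = t * (u * x - 1) * (x - u) / (u * x ^+ 2) by field; rewrite ?gt_eqF.
rewrite divr_gt0 ?mulr_gt0 ?exprn_gt0 ?subr_gt0 //.
by rewrite -[1]mulr1 ltr_pM // ltW.
Qed.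

Lemma is_derive_tanh_ratio (x : R) : 1 < x ->
  is_derive x 1 (tanh_ratio t)
    (2 * x `^ t * tanh_ratio_dnum t x / ((x `^ t + 1) * (x - 1)) ^+ 2).
Proof.
move=> x1; have x0 : 0 < x by apply: lt_trans x1.
have P := is_derive1_powR t x0.
have u0 : 0 < x `^ t by apply: powR_gt0.
rewrite /tanh_ratio; apply: is_derive_eq.
  apply: is_deriveM; apply: is_deriveV.
  by rewrite mulf_neq0 // gt_eqF ?subr_gt0 // addr_gt0.
rewrite /= /tanh_ratio_dnum powRB1 // powRN /GRing.scale /=.
by field; rewrite !gt_eqF ?subr_gt0 // addr_gt0.
Qed.

Lemma tanh_ratio_lt (r1 r2 : R) : 1 < r1 -> r1 < r2 ->
  tanh_ratio t r1 < tanh_ratio t r2.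
Proof.
move=> r1_gt1 r12.
apply: (gtr0_is_derive_lt (f := tanh_ratio t) r12) => x /andP[x1 _].
  exact/is_derive_tanh_ratio/(lt_le_trans r1_gt1 x1).
have {}x1 : 1 < x by apply: lt_trans x1.
have x0 : 0 < x by apply: lt_trans x1.
have D_gt0 : 0 < (x `^ t + 1) * (x - 1).
  by rewrite mulr_gt0 ?subr_gt0 // addr_gt0 // powR_gt0.
by rewrite divr_gt0 ?exprn_gt0 // !mulr_gt0 ?powR_gt0 ?tanh_ratio_dnum_gt0.
Qed.

Lemma tanh_ratio_lt1 (r : R) : 1 < r -> tanh_ratio t r < 1.
Proof.
move=> r1; have u1 : 1 < r `^ t by apply: powR_gt1.
have ur : r `^ t < r by apply: ltr1_powR.
rewrite /tanh_ratio ltr_pdivrMr ?mul1r; last first.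
  by rewrite mulr_gt0 ?subr_gt0 // addr_gt0 // powR_gt0 // (lt_trans ltr01).
set u := r `^ t in u1 ur *; nra.
Qed.

Lemma godds_tanh_ratio (r : R) : 1 < r ->
  godds t r = 2 * tanh_ratio t r / (1 - tanh_ratio t r).
Proof.
move=> r1; have u1 : 1 < r `^ t by apply: powR_gt1.
have ur : r `^ t < r by apply: ltr1_powR.
rewrite /godds /tanh_ratio; set u := r `^ t in u1 ur *.
have D_neq0 : (u + 1) * (r - 1) - (u - 1) * (r + 1) != 0.
  by rewrite gt_eqF //; nra.
field.
by rewrite D_neq0 !gt_eqF ?subr_gt0 // addr_gt0 // (lt_trans ltr01).
Qed.

Lemma godds_lt (r1 r2 : R) : 1 < r1 -> r1 < r2 -> godds t r1 < godds t r2.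
Proof.
move=> r1_gt1 r12; have r2_gt1 : 1 < r2 by apply: lt_trans r12.
rewrite !godds_tanh_ratio //.
have q12 := tanh_ratio_lt r1_gt1 r12.
have q2 := tanh_ratio_lt1 r2_gt1.
have q1 : tanh_ratio t r1 < 1 by apply: lt_trans q2.
set a := tanh_ratio t r1 in q12 q1 *; set c := tanh_ratio t r2 in q12 q2 *.
rewrite ltr_pdivrMr ?subr_gt0 // mulrAC ltr_pdivlMr ?subr_gt0 //; nra.
Qed.

Lemma godds_ge (r : R) : 1 < r -> r `^ t - 1 <= godds t r.
Proof.
move=> r1; have u1 : 1 < r `^ t by apply: powR_gt1.
have ur : r `^ t < r by apply: ltr1_powR.
rewrite /godds; set u := r `^ t in u1 ur *.
rewrite ler_pdivlMr ?subr_gt0 //; nra.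
Qed.

Lemma godds_continuous (r : R) : 1 < r -> {for r, continuous (godds t)}.
Proof.
move=> r1; have P := is_derive1_powR t (lt_trans ltr01 r1).
apply: is_derive1_continuous; rewrite /godds.
by apply: is_deriveM; apply: is_deriveV; rewrite gt_eqF // subr_gt0 ltr1_powR.
Qed.

Lemma tanh_ratio_bounds (r : R) : 1 < r ->
  t / r <= tanh_ratio t r <= t * (r + 1) / 2.
Proof.
move=> r1; have r0 : 0 < r by apply: lt_trans r1.
have [c /andP[c1 cr] E] := powR_MVT t r1.
have c0 : 0 < c by apply: lt_trans c1.
have p1 : c `^ (t - 1) < 1.
  by rewrite -[X in _ < X](powRr0 c) ltr_powR // subr_lt0.
have p2 : r `^ t / r <= c `^ (t - 1).
  rewrite -powRB1 // !powRE // ler_expR.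
  have : ln c <= ln r by rewrite ler_ln ?posrE // ltW.
  have := t_lt1; nra.
have u1 : 1 < r `^ t by apply: powR_gt1.
have ur : r `^ t < r by apply: ltr1_powR.
have p0 : 0 < c `^ (t - 1) by apply: powR_gt0.
rewrite /tanh_ratio E.
set u := r `^ t in u1 ur p2 *; set p := c `^ (t - 1) in p0 p1 p2 *.
have u0 : 0 < u + 1 by rewrite addr_gt0 // (lt_trans ltr01).
have -> : t * p * (r - 1) * (r + 1) / ((u + 1) * (r - 1))
    = t * p * (r + 1) / (u + 1).
  by field; rewrite !gt_eqF ?subr_gt0.
have hp : u <= p * r by rewrite -ler_pdivrMr.
apply/andP; split.
  rewrite ler_pdivrMr // mulrAC ler_pdivlMr //.
  have H1 : 0 <= t * (r + 1) * (p * r - u).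
    by rewrite !mulr_ge0 ?subr_ge0 ?addr_ge0 // ltW.
  have H2 : 0 <= t * (u * r - 1).
    rewrite mulr_ge0 ?subr_ge0 ?(ltW t_gt0) //.
    by rewrite (le_trans (ltW u1)) // ler_peMr ?ltW // (lt_trans ltr01 u1).
  nra.
rewrite ler_pdivrMr //.
have H : 0 <= t * (r + 1) * (u + 1 - 2 * p).
  by rewrite !mulr_ge0 ?(ltW t_gt0) //; lra.
nra.
Qed.

End OddsForm.

Section Odds.
Context {R : realType}.

Definition odds (x : R) := x / (1 - x).

Lemma odds_gt1 (x : R) : 2^-1 < x -> x < 1 -> 1 < odds x.
Proof.
move=> x_gt x1; rewrite /odds ltr_pdivlMr ?subr_gt0 // mul1r.
have : 1 < x * 2 by rewrite -ltr_pdivrMr // div1r.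
lra.
Qed.

Lemma odds_lt (x y : R) : x < y -> y < 1 -> odds x < odds y.
Proof.
move=> xy y1; have x1 : x < 1 by apply: lt_trans y1.
rewrite /odds ltr_pdivrMr ?subr_gt0 // mulrAC ltr_pdivlMr ?subr_gt0 //; nra.
Qed.

Lemma odds_continuous (x : R) : x < 1 -> {for x, continuous odds}.
Proof.
move=> x1; apply: is_derive1_continuous; rewrite /odds.
by apply: is_deriveM; apply: is_deriveV; rewrite gt_eqF // subr_gt0.
Qed.

Lemma tanh_ratio_odds_cvg (t : R) : 0 < t < 1 ->
  tanh_ratio t (odds z) @[z --> 2^-1^'+] --> t.
Proof.
move=> t01.
pose lo z := t * (z^-1 - 1).
pose hi z := t / (2 * (1 - z)).
have half_lt1 : 2^-1 < 1 :> R by rewrite invf_lt1 // ltr1n.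
have lo_cont : {for 2^-1, continuous lo}.
  apply: is_derive1_continuous; rewrite /lo.
  by apply: is_deriveM; apply: is_deriveB; apply: is_deriveV; rewrite gt_eqF.
have hi_cont : {for 2^-1, continuous hi}.
  apply: is_derive1_continuous; rewrite /hi.
  by apply: is_deriveM; apply: is_deriveV; rewrite mulf_neq0 // gt_eqF ?subr_gt0.
have lo_half : lo 2^-1 = t by rewrite /lo invrK; field.
have hi_half : hi 2^-1 = t by rewrite /hi; field.
apply: (squeeze_cvgr (f := lo) (h := hi)); last 2 first.
- by rewrite -[X in _ --> X]lo_half; exact: cvg_within_filter.
- by rewrite -[X in _ --> X]hi_half; exact: cvg_within_filter.
near=> z.
have z_gt : 2^-1 < z by near: z; exact: nbhs_right_gt.
have z1 : z < 1 by near: z; exact: nbhs_right_lt.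
have z0 : 0 < z by apply: lt_trans z_gt.
have -> : lo z = t / odds z by rewrite /lo /odds; field; rewrite !gt_eqF ?subr_gt0.
have -> : hi z = t * (odds z + 1) / 2.
  by rewrite /hi /odds; field; rewrite !gt_eqF ?subr_gt0.
exact/tanh_ratio_bounds/odds_gt1.
Unshelve. all: by end_near. Qed.

End Odds.

Section RealValuedG.
Context {R : realType}.

(* junk value greal b 1 = fine +oo = 0, hence the hypothesis x != 1 in gfunE *)
Definition greal (b x : R) := fine (gfun x b).

Lemma gfunE (b x : R) : x != 1 -> gfun x b = (greal b x)%:E.
Proof. by move=> x1; rewrite /greal /gfun (negbTE x1); case: ifP. Qed.

Lemma greal_half (b : R) : greal b 2^-1 = 2 / b - 2.
Proof.
by rewrite /greal /gfun eqxx ifF //; apply/negbTE; rewrite invr_eq1 pnatr_eq1.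
Qed.

Lemma greal_odds (b x : R) : 0 < b < 1 -> 2^-1 < x < 1 ->
  greal b x = godds (1 - b) (odds x).
Proof.
move=> /andP[b0 b1] /andP[x_gt x1].
rewrite /greal /gfun lt_eqF // gt_eqF //=.
have r1 := odds_gt1 x_gt x1.
have c0 : 0 < 1 - x by rewrite subr_gt0.
have ur : odds x `^ (1 - b) < odds x by apply: ltr1_powR; lra.
have xE : x = odds x * (1 - x) by rewrite /odds divfK // gt_eqF.
have -> : x `^ (1 - b) = odds x `^ (1 - b) * (1 - x) `^ (1 - b).
  by rewrite {1}xE powRM // ltW // (lt_trans ltr01).
have C0 : 0 < (1 - x) `^ (1 - b) by apply: powR_gt0.
rewrite /godds.
move: ur C0; set u := odds x `^ (1 - b); set C := (1 - x) `^ (1 - b).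
rewrite /odds => ur C0; clearbody u C.
have D_neq0 : x * C - (1 - x) * (u * C) != 0.
  have -> : x * C - (1 - x) * (u * C) = C * (1 - x) * (x / (1 - x) - u).
    by field; rewrite gt_eqF.
  by rewrite gt_eqF // !mulr_gt0 // subr_gt0.
field.
by rewrite D_neq0 andbT !gt_eqF ?subr_gt0 // mulNr subr_gt0 -ltr_pdivlMr.
Qed.

Lemma greal_lt_b (x b1 b2 : R) : 2^-1 <= x < 1 -> 0 < b1 -> b1 < b2 -> b2 < 1 ->
  greal b2 x < greal b1 x.
Proof.
case/andP; rewrite le_eqVlt => /predU1P[<- _|x_gt x1] b10 b12 b21.
  have b20 : 0 < b2 by apply: lt_trans b12.
  by rewrite !greal_half ltrD2r ltr_pM2l // ltf_pV2.
rewrite !greal_odds ?x_gt ?x1 ?b10 ?(lt_trans b10 b12) ?(lt_trans b12 b21) //.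
by apply: godds_lt_exponent; rewrite ?odds_gt1 //; lra.
Qed.

Variable b : R.
Hypothesis b01 : 0 < b < 1.

Let t01 : 0 < 1 - b < 1.
Proof. by case/andP: b01 => b0 b1; apply/andP; split; lra. Qed.

Lemma greal_near_odds (x : R) : 2^-1 < x < 1 ->
  \forall z \near x, greal b z = godds (1 - b) (odds z).
Proof.
move=> /andP[x_gt x1]; near=> z; apply: greal_odds => //; apply/andP; split.
- by near: z; exact: lt_nbhsr.
- by near: z; exact: lt_nbhsl.
Unshelve. all: by end_near. Qed.

Lemma greal_continuous (x : R) : 2^-1 < x < 1 -> {for x, continuous (greal b)}.
Proof.
move=> x_in; have E := greal_near_odds x_in; have /andP[x_gt x1] := x_in.
have c : {for x, continuous (godds (1 - b) \o odds)}.
  apply: continuous_comp; first exact: odds_continuous.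
  exact/(godds_continuous t01)/odds_gt1.
rewrite /prop_for /continuous_at (nbhs_singleton E).
by apply: cvg_trans c; apply: near_eq_cvg; apply: filterS E.
Qed.

Lemma greal_cvg_half : greal b z @[z --> 2^-1^'+] --> 2 / b - 2.
Proof.
have /andP[b0 b1] := b01.
pose h (q : R) := 2 * q / (1 - q).
have h_cont : {for (1 - b), continuous h}.
  apply: is_derive1_continuous; rewrite /h.
  by apply: is_deriveM; apply: is_deriveV; rewrite gt_eqF //; lra.
have <- : h (1 - b) = 2 / b - 2 by rewrite /h; field; rewrite gt_eqF //; lra.
apply: cvg_trans (continuous_cvg _ h_cont (tanh_ratio_odds_cvg t01)).
apply: near_eq_cvg; near=> z.
have z_gt : 2^-1 < z by near: z; exact: nbhs_right_gt.
have z1 : z < 1 by near: z; apply: nbhs_right_lt; rewrite invf_lt1 // ltr1n.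
by rewrite /= greal_odds ?z_gt // godds_tanh_ratio // odds_gt1.
Unshelve. all: by end_near. Qed.

Lemma greal_lt_interior (x y : R) : 2^-1 < x -> x < y -> y < 1 ->
  greal b x < greal b y.
Proof.
move=> x_gt xy y1; have x1 : x < 1 by apply: lt_trans y1.
have y_gt : 2^-1 < y by apply: lt_trans xy.
rewrite !greal_odds ?x_gt ?y_gt ?x1 ?y1 //.
exact/(godds_lt t01)/odds_lt/y1/xy/odds_gt1.
Qed.

Lemma greal_homo_lt : {in `[2^-1, 1[ &, {homo greal b : x y / x < y}}.
Proof.
move=> x y; rewrite !in_itv /= => /andP[+ _] /andP[_ y1].
rewrite le_eqVlt => /predU1P[<- hy|]; last by move=> x_gt xy; exact: greal_lt_interior.
pose m := (2^-1 + y) / 2.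
have m_gt : 2^-1 < m by rewrite /m; lra.
have my : m < y by rewrite /m; lra.
apply: le_lt_trans (greal_lt_interior m_gt my y1).
rewrite greal_half; apply: (ler_cvg_to greal_cvg_half (cvg_cst (greal b m))).
near=> z; apply/ltW/greal_lt_interior.
- by near: z; exact: nbhs_right_gt.
- by near: z; exact: nbhs_right_lt.
- exact: lt_trans y1.
Unshelve. all: by end_near. Qed.

Lemma greal_unbounded (A : R) : exists2 y, 2^-1 < y < 1 & A < greal b y.
Proof.
have /andP[b0 b1] := b01.
pose B := Num.max (A + 1) 1.
have B1 : 1 <= B by rewrite le_max lexx orbT.
have AB : A + 1 <= B by rewrite le_max lexx.
have B0 : 0 < B by apply: lt_le_trans B1.
(* r is chosen so that r^(1-b) > B >= A + 1, while g >= r^(1-b) - 1 *)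
pose M := B `^ ((1 - b)^-1).
have M0 : 0 < M by apply: powR_gt0.
pose r := M + 1.
have r1 : 1 < r by rewrite ltrDr.
have r0 : 0 < r by apply: lt_trans r1.
have Mt : M `^ (1 - b) = B.
  by rewrite -powRrM mulVf ?powRr1 ?ltW // gt_eqF //; lra.
have rt : B < r `^ (1 - b).
  rewrite -Mt; apply: gt0_ltr_powR; rewrite ?nnegrE ?ltW ?ltrDl //; lra.
have y_gt : 2^-1 < r / (1 + r) by rewrite ltr_pdivlMr ?addr_gt0 //; lra.
have y1 : r / (1 + r) < 1 by rewrite ltr_pdivrMr ?addr_gt0 //; lra.
exists (r / (1 + r)); first by rewrite y_gt y1.
rewrite greal_odds ?y_gt ?y1 //.
have -> : odds (r / (1 + r)) = r.
  by rewrite /odds; field; rewrite addrK oner_neq0 andbT gt_eqF // addr_gt0.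
apply: lt_le_trans (godds_ge t01 r1); lra.
Qed.

Lemma greal_within_continuous (y : R) : 2^-1 < y < 1 ->
  {within `[2^-1, y], continuous (greal b)}.
Proof.
move=> /andP[y_gt y1]; apply/continuous_within_itvP => //; split.
- move=> x; rewrite in_itv /= => /andP[x_gt xy].
  by apply: greal_continuous; rewrite x_gt (lt_trans xy).
- by rewrite greal_half; exact: greal_cvg_half.
- by apply: cvg_within_filter; apply: greal_continuous; rewrite y_gt y1.
Qed.

Lemma greal_solve (v : R) : 2 / b - 2 < v ->
  exists2 x, 2^-1 < x < 1 & greal b x = v.
Proof.
move=> v_gt; have [y y_in v_lt] := greal_unbounded v; have /andP[y_gt y1] := y_in.
have v_in : Num.min (greal b 2^-1) (greal b y) <= v <= Num.max (greal b 2^-1) (greal b y).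
  by rewrite greal_half ge_min le_max (ltW v_gt) (ltW v_lt) orbT.
have [x] := IVT (ltW y_gt) (greal_within_continuous y_in) v_in.
rewrite in_itv /= le_eqVlt => /andP[/predU1P[<-|x_gt] xy] gx.
  by move: v_gt; rewrite -gx greal_half ltxx.
by exists x; rewrite // x_gt (le_lt_trans xy).
Qed.

End RealValuedG.

Section G.
Context {R : realType}.
Variable b : R.
Hypothesis b01 : 0 < b < 1.

Local Notation g := (fun x : R => gfun x b).
Local Notation I := [set` `[2^-1, 1]] (only parsing).

Lemma gfun_cvg_within1 : g z @[z --> within I (nbhs (1 : R))] --> +oo%E.
Proof.
apply/cvgeyPge => A; have [y /andP[y_gt y1] A_lt] := greal_unbounded b01 A.
rewrite near_withinE; near=> z; rewrite /= in_itv /= => /andP[_ z1].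
have yz : y < z by near: z; exact: lt_nbhsr.
have [->|z_neq1] := eqVneq z 1; first by rewrite /gfun eqxx leey.
rewrite gfunE // lee_fin; apply/ltW/(lt_trans A_lt)/greal_lt_interior => //.
by rewrite lt_neqAle z_neq1.
Unshelve. all: by end_near. Qed.

Lemma gfun_cvg_within_half : g z @[z --> within I (nbhs (2^-1 : R))] --> g 2^-1.
Proof.
have half_neq1 : 2^-1 != 1 :> R by rewrite invr_eq1 pnatr_eq1.
have half_lt1 : 2^-1 < 1 :> R by rewrite invf_lt1 // ltr1n.
rewrite gfunE // greal_half; apply: cvg_EFin.
  rewrite near_withinE; near=> z => _; rewrite gfunE ?lt_eqF //.
  by near: z; exact: lt_nbhsl.
apply/cvgrPdist_lt => e e0.
move/cvgrPdist_lt: (greal_cvg_half b01) => /(_ e e0).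
rewrite /at_right near_withinE => near_half.
rewrite near_withinE; near=> z; rewrite /= in_itv /= => /andP[+ _].
have z1 : z < 1 by near: z; exact: lt_nbhsl.
have near_z : 2^-1 < z -> `|2 / b - 2 - greal b z| < e by near: z.
rewrite /= gfunE ?lt_eqF //= le_eqVlt => /predU1P[<-|/near_z //].
by rewrite greal_half subrr normr0.
Unshelve. all: by end_near. Qed.

Lemma gfun_continuous : {within `[2^-1, 1], continuous g}.
Proof.
apply/subspace_continuousP => x /=; rewrite /from_subspace in_itv /= => /andP[x_ge x_le1].
have [->|x_neq1] := eqVneq x 1.
  by rewrite [X in _ --> X]/gfun eqxx; exact: gfun_cvg_within1.
have x1 : x < 1 by rewrite lt_neqAle x_neq1.
move: x_ge; rewrite le_eqVlt => /predU1P[<-|x_gt]; first exact: gfun_cvg_within_half.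
apply: cvg_within_filter; rewrite gfunE //; apply: cvg_EFin.
  by near=> z; rewrite gfunE ?lt_eqF //; near: z; exact: lt_nbhsl.
apply: cvg_trans (greal_continuous b01 _); last by rewrite x_gt.
apply: near_eq_cvg; near=> z; rewrite /= gfunE ?lt_eqF //.
by near: z; exact: lt_nbhsl.
Unshelve. all: by end_near. Qed.

End G.

Section Solution.
Context {R : realType}.

Lemma gfun_increasing (b x y : R) : 0 < b < 1 -> 2^-1 <= x -> x < y -> y <= 1 ->
  (gfun x b < gfun y b)%E.
Proof.
move=> b01 x_ge xy y_le1; have x1 : x < 1 by apply: lt_le_trans y_le1.
have [->|y_neq1] := eqVneq y 1; first by rewrite gfunE ?lt_eqF // /gfun eqxx ltey.
have y1 : y < 1 by rewrite lt_neqAle y_neq1.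
rewrite !gfunE ?lt_eqF // lte_fin.
by apply: greal_homo_lt; rewrite // in_itv /= ?x_ge ?x1 ?y1 // (le_trans x_ge) ?ltW.
Qed.

Lemma gfun_decreasing_b (x b1 b2 : R) : 2^-1 <= x < 1 ->
  0 < b1 -> b1 < b2 -> b2 < 1 -> (gfun x b2 < gfun x b1)%E.
Proof.
move=> x_in b10 b12 b21; have /andP[_ x1] := x_in.
by rewrite !gfunE ?lt_eqF // lte_fin greal_lt_b.
Qed.

Lemma gfun_solution_unique (b v : R) : 0 < b < 1 -> 2 / b - 2 < v ->
  exists! x, 2^-1 < x < 1 /\ gfun x b = v%:E.
Proof.
move=> b01 v_gt; have [x x_in gx] := greal_solve b01 v_gt.
have /andP[x_gt x1] := x_in.
exists x; split; first by rewrite gfunE ?lt_eqF // gx.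
move=> y [/andP[y_gt y1]]; rewrite gfunE ?lt_eqF // -gx => -[gy].
apply: (inc_inj_in (le_mono_in (greal_homo_lt b01))) => //.
all: by rewrite in_itv /= ltW.
Qed.

Lemma gfun_solution_lt (b1 b2 v1 v2 x1 x2 : R) :
  0 < b1 -> b1 <= b2 -> b2 < 1 -> v1 <= v2 -> (b1 < b2) || (v1 < v2) ->
  2^-1 < x1 < 1 -> gfun x1 b1 = v1%:E ->
  2^-1 < x2 < 1 -> gfun x2 b2 = v2%:E -> x1 < x2.
Proof.
move=> b10 b12 b21 v12 strict /andP[x1_gt x1_lt1] g1 /andP[x2_gt x2_lt1] g2.
have b01 : 0 < b2 < 1 by rewrite (lt_le_trans b10 b12).
move: g1 g2; rewrite !gfunE ?lt_eqF // => -[g1] [g2].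
rewrite -(leW_mono_in (le_mono_in (greal_homo_lt b01))) ?in_itv /= ?ltW //.
rewrite g2; move: b12 strict; rewrite le_eqVlt => /predU1P[<-|b_lt] strict.
  by rewrite ltxx /= in strict; rewrite g1.
by apply: lt_le_trans v12; rewrite -g1 greal_lt_b ?ltW.
Qed.

End Solution.

Lemma lt_threshold (R : realType) (v b : R) : 0 < v -> 2 / (v + 2) < b ->
  0 < b /\ 2 / b - 2 < v.
Proof.
move=> v0 hb; have b0 : 0 < b by apply: lt_trans hb; rewrite divr_gt0 // addr_gt0.
split => //; move: hb; rewrite ltr_pdivrMr ?addr_gt0 // => hb.
rewrite ltrBlDr ltr_pdivrMr //; lra.
Qed.

Theorem lemmaB2 (R : realType) :
  (* (i) continuity in x on [1/2,1], as an extended-real-valued function *)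
  (forall b : R, 0 < b < 1 ->
     {within `[2^-1, 1], continuous (fun x => gfun x b)})
  /\
  (* (ii) strictly increasing in x on [1/2,1] *)
  (forall b x y : R, 0 < b < 1 -> 2^-1 <= x -> x < y -> y <= 1 ->
     (gfun x b < gfun y b)%E)
  /\
  (* (ii) strictly decreasing in b (for x in [1/2,1); at x = 1 both sides are +oo) *)
  (forall x b1 b2 : R, 2^-1 <= x < 1 -> 0 < b1 -> b1 < b2 -> b2 < 1 ->
     (gfun x b2 < gfun x b1)%E)
  /\
  (* (iii) existence and uniqueness of the solution xhat in (1/2,1) *)
  (forall phi hG b : R, 0 < phi < 1 -> 1 < hG ->
     2 / (phi * (hG - 1) + 2) < b -> b < 1 ->
     exists! x : R, 2^-1 < x < 1 /\ gfun x b = (phi * (hG - 1))%:E)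
  /\
  (* (iii) xhat(phi,hG,b) is strictly increasing in each of b, hG, phi:
     if (phi1,hG1,b1) <= (phi2,hG2,b2) differ in exactly one coordinate
     (strictly larger), then the solutions satisfy x1 < x2 *)
  (forall phi1 hG1 b1 phi2 hG2 b2 x1 x2 : R,
     0 < phi1 < 1 -> 1 < hG1 -> 2 / (phi1 * (hG1 - 1) + 2) < b1 -> b1 < 1 ->
     0 < phi2 < 1 -> 1 < hG2 -> 2 / (phi2 * (hG2 - 1) + 2) < b2 -> b2 < 1 ->
     [\/ [/\ b1 < b2, hG1 = hG2 & phi1 = phi2],
         [/\ b1 = b2, hG1 < hG2 & phi1 = phi2] |
         [/\ b1 = b2, hG1 = hG2 & phi1 < phi2]] ->
     2^-1 < x1 < 1 -> gfun x1 b1 = (phi1 * (hG1 - 1))%:E ->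
     2^-1 < x2 < 1 -> gfun x2 b2 = (phi2 * (hG2 - 1))%:E ->
     x1 < x2).
Proof.
have target_gt0 (phi hG : R) : 0 < phi -> 1 < hG -> 0 < phi * (hG - 1).
  by move=> phi0 hG1; rewrite mulr_gt0 // subr_gt0.
split; first by move=> b; exact: gfun_continuous.
split; first exact: gfun_increasing.
split; first exact: gfun_decreasing_b.
split.
  move=> phi hG b /andP[phi0 _] hG1 hb b1.
  have [b0 v_gt] := lt_threshold (target_gt0 _ _ phi0 hG1) hb.
  by apply: gfun_solution_unique; rewrite ?b0.
move=> phi1 hG1 b1 phi2 hG2 b2 x1 x2 /andP[phi10 _] hG11 hb1 b11
  /andP[phi20 _] hG21 hb2 b21 cases.
have [b10 _] := lt_threshold (target_gt0 _ _ phi10 hG11) hb1.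
case: cases => -[b12 hG12 phi12].
- subst hG2 phi2.
  by apply: (gfun_solution_lt b10 (ltW b12) b21); rewrite ?lexx ?b12.
- subst b2 phi2.
  have v_lt : phi1 * (hG1 - 1) < phi1 * (hG2 - 1) by rewrite ltr_pM2l // ltrD2r.
  by apply: (gfun_solution_lt b10 (lexx _) b21 (ltW v_lt)); rewrite ?v_lt ?orbT.
- subst b2 hG2.
  have v_lt : phi1 * (hG1 - 1) < phi2 * (hG1 - 1) by rewrite ltr_pM2r ?subr_gt0.
  by apply: (gfun_solution_lt b10 (lexx _) b21 (ltW v_lt)); rewrite ?v_lt ?orbT.
Qed.
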